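(* (a) For every proposition $p$ of QHC: if $p$ is stable then the problem $!p$ is stable, and if $p$ is decidable then the problem $!p$ is decidable. Conversely, if $p$ is of the form $?\alpha$ for a problem $\alpha$, then stability (resp. decidability) of the problem $!p$ implies stability (resp. decidability) of $p$. (b) For every problem $\alpha$ of QHC: if $\alpha$ is stable then the proposition $?\alpha$ is stable, and if $\alpha$ is decidable then $?\alpha$ is decidable. Conversely, if $\alpha$ is of the form $!p$ for a proposition $p$, then stability (resp. decidability) of $?\alpha$ implies stability (resp. decidability) of $\alpha$.
   Context: QHC is a two-sorted first-order calculus. Its only terms are individual variables. Every formula is either a problem (denoted by Greek letters $\alpha,\beta,\gamma,\dots$) or a proposition (denoted by Latin letters $p,q,\dots$). Atomic formulas are proposition variables $p(t_1,\dots,t_n)$ (of proposition type), problem variables $\pi(t_1,\dots,t_n)$ (of problem type), and the constants $0$ (a proposition, classical falsity) and $\bot$ (a problem, intuitionistic absurdity). Propositions are closed under the classical connectives $\land,\lor,\to$ and quantifiers $\exists,\forall$; problems are closed under the intuitionistic connectives $\land,\lor,\to$ and quantifiers $\exists,\forall$ (the same symbols are used, distinguished by the type of the arguments). $\neg p$ abbreviates $p\to 0$, $\neg\alpha$ abbreviates $\alpha\to\bot$, and $\leftrightarrow$ is defined as usual. There are two type-conversion operators: if $p$ is a proposition then $!p$ is a problem, and if $\alpha$ is a problem then $?\alpha$ is a proposition. Deductive system of QHC: all axioms and rules of classical predicate logic applied to all propositions; all postulates and rules of intuitionistic predicate logic applied to all problems; the rules $p\,/\,!p$ and $\alpha\,/\,?\alpha$;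 and the schemas $?!p\to p$; $\alpha\to\, !?\alpha$; $!(p\to q)\to(!p\to !q)$; $?(\alpha\to\beta)\to(?\alpha\to ?\beta)$; $!0\to\bot$; $?(\alpha\land\beta)\leftrightarrow ?\alpha\land ?\beta$; $?(\alpha\lor\beta)\leftrightarrow ?\alpha\lor ?\beta$; $?\bot\to 0$; $?\exists x\,\alpha(x)\leftrightarrow\exists x\,?\alpha(x)$; $?\forall x\,\alpha(x)\to\forall x\,?\alpha(x)$ (usual variable side conditions implicit). $\vdash A$ means $A$ is derivable in QHC; $A\Rightarrow B$ means $\vdash A\to B$ and $A\Leftrightarrow B$ means $\vdash A\leftrightarrow B$ (with $A,B$ of the same type); $A\vdash B$ means $B$ is derivable in QHC from the premise $A$. Notation: $\Box p := ?!p$ (a proposition) and $\nabla\alpha := !?\alpha$ (a problem). QC and QH denote classical and intuitionistic predicate calculus. A problem $\alpha$ is decidable if $\vdash\alpha\lor\neg\alpha$, and stable if $\neg\neg\alpha\Rightarrow\alpha$. A proposition $p$ is decidable if $\vdash\, !p\lor !\neg p$, and stable if $\neg !\neg p\Rightarrow\, !p$. *)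

(* Syntax and Hilbert-style deductive system of QHC.
   Individual variables are de Bruijn indices (terms are only variables). *)
From Stdlib Require Import List.
Import ListNotations.

(* Propositions (classical sort) and problems (intuitionistic sort). *)
Inductive prop : Type :=
| PVar : nat -> list nat -> prop
| PFalse : prop
| PAnd : prop -> prop -> prop
| POr : prop -> prop -> prop
| PImp : prop -> prop -> prop
| PEx : prop -> prop                    (* binds de Bruijn index 0 *)
| PAll : prop -> prop
| PQ : prob -> prop                     (* ?alpha *)
with prob : Type :=
| AVar : nat -> list nat -> prob
| ABot : prob
| AAnd : prob -> prob -> prob
| AOr : prob -> prob -> prob
| AImp : prob -> prob -> prob
| AEx : prob -> prob
| AAll : prob -> prob
| ABang : prop -> prob.

Definition up (s : nat -> nat) : nat -> nat :=
  fun n => match n with 0 => 0 | S k => S (s k) end.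

Fixpoint renP (s : nat -> nat) (p : prop) : prop :=
  match p with
  | PVar i ts => PVar i (map s ts)
  | PFalse => PFalse
  | PAnd a b => PAnd (renP s a) (renP s b)
  | POr a b => POr (renP s a) (renP s b)
  | PImp a b => PImp (renP s a) (renP s b)
  | PEx a => PEx (renP (up s) a)
  | PAll a => PAll (renP (up s) a)
  | PQ a => PQ (renA s a)
  end
with renA (s : nat -> nat) (a : prob) : prob :=
  match a with
  | AVar i ts => AVar i (map s ts)
  | ABot => ABot
  | AAnd a b => AAnd (renA s a) (renA s b)
  | AOr a b => AOr (renA s a) (renA s b)
  | AImp a b => AImp (renA s a) (renA s b)
  | AEx a => AEx (renA (up s) a)
  | AAll a => AAll (renA (up s) a)
  | ABang p => ABang (renP s p)
  end.

(* substitution of the variable t for the bound index 0 *)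
Definition inst (t : nat) : nat -> nat :=
  fun n => match n with 0 => t | S k => k end.

Definition PNeg (p : prop) : prop := PImp p PFalse.
Definition ANeg (a : prob) : prob := AImp a ABot.
Definition PIff (p q : prop) : prop := PAnd (PImp p q) (PImp q p).

Inductive provP : prop -> Prop :=
| P_K a b : provP (PImp a (PImp b a))
| P_S a b c : provP (PImp (PImp a (PImp b c)) (PImp (PImp a b) (PImp a c)))
| P_AndE1 a b : provP (PImp (PAnd a b) a)
| P_AndE2 a b : provP (PImp (PAnd a b) b)
| P_AndI a b : provP (PImp a (PImp b (PAnd a b)))
| P_OrI1 a b : provP (PImp a (POr a b))
| P_OrI2 a b : provP (PImp b (POr a b))
| P_OrE a b c : provP (PImp (PImp a c) (PImp (PImp b c) (PImp (POr a b) c)))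
| P_Efq a : provP (PImp PFalse a)
| P_DNE a : provP (PImp (PNeg (PNeg a)) a)
| P_MP a b : provP (PImp a b) -> provP a -> provP b
| P_AllE a t : provP (PImp (PAll a) (renP (inst t) a))
| P_ExI a t : provP (PImp (renP (inst t) a) (PEx a))
| P_AllI a b : provP (PImp (renP S b) a) -> provP (PImp b (PAll a))
| P_ExE a b : provP (PImp a (renP S b)) -> provP (PImp (PEx a) b)
| P_QRule a : provA a -> provP (PQ a)
| P_QBang p : provP (PImp (PQ (ABang p)) p)
| P_QImp a b : provP (PImp (PQ (AImp a b)) (PImp (PQ a) (PQ b)))
| P_QAnd a b : provP (PIff (PQ (AAnd a b)) (PAnd (PQ a) (PQ b)))
| P_QOr a b : provP (PIff (PQ (AOr a b)) (POr (PQ a) (PQ b)))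
| P_QBot : provP (PImp (PQ ABot) PFalse)
| P_QEx a : provP (PIff (PQ (AEx a)) (PEx (PQ a)))
| P_QAll a : provP (PImp (PQ (AAll a)) (PAll (PQ a)))
with provA : prob -> Prop :=
| A_K a b : provA (AImp a (AImp b a))
| A_S a b c : provA (AImp (AImp a (AImp b c)) (AImp (AImp a b) (AImp a c)))
| A_AndE1 a b : provA (AImp (AAnd a b) a)
| A_AndE2 a b : provA (AImp (AAnd a b) b)
| A_AndI a b : provA (AImp a (AImp b (AAnd a b)))
| A_OrI1 a b : provA (AImp a (AOr a b))
| A_OrI2 a b : provA (AImp b (AOr a b))
| A_OrE a b c : provA (AImp (AImp a c) (AImp (AImp b c) (AImp (AOr a b) c)))
| A_Efq a : provA (AImp ABot a)
| A_MP a b : provA (AImp a b) -> provA a -> provA b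
| A_AllE a t : provA (AImp (AAll a) (renA (inst t) a))
| A_ExI a t : provA (AImp (renA (inst t) a) (AEx a))
| A_AllI a b : provA (AImp (renA S b) a) -> provA (AImp b (AAll a))
| A_ExE a b : provA (AImp a (renA S b)) -> provA (AImp (AEx a) b)
| A_BangRule p : provP p -> provA (ABang p)
| A_BangQ a : provA (AImp a (ABang (PQ a)))
| A_BangImp p q : provA (AImp (ABang (PImp p q)) (AImp (ABang p) (ABang q)))
| A_BangFalse : provA (AImp (ABang PFalse) ABot).

Definition decA (a : prob) : Prop := provA (AOr a (ANeg a)).
Definition stableA (a : prob) : Prop := provA (AImp (ANeg (ANeg a)) a).
Definition decP (p : prop) : Prop := provA (AOr (ABang p) (ABang (PNeg p))).
Definition stableP (p : prop) : Prop :=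
  provA (AImp (ANeg (ABang (PNeg p))) (ABang p)).

(* Stability and decidability of a problem or a proposition share one shape:
   with a "positive" problem Y and a "negative" problem N, stability is
   |- ~N -> Y and decidability is |- Y \/ N (for a problem a: Y = a, N = ~a;
   for a proposition p: Y = !p, N = !~p).  Both shapes are transported along
   a pair of derivable implications Y' -> Y and N' -> N (lemma [transfer]).
   Each of the four claims of the proposition is therefore reduced to two
   implications between problems, built from the bridge facts
     !~p -> ~!p      (bang_neg),        ~a -> !~?a      (neg_bang_quest),
   the schema a -> !?a and the rule deriving !p -> !q from p -> q. *)
From Stdlib Require Import List.
Import ListNotations.

Inductive derA (G : list prob) : prob -> Prop :=
| derA_hyp a : In a G -> derA G a
| derA_thm a : provA a -> derA G a
| derA_mp a b : derA G (AImp a b) -> derA G a -> derA G b.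

Inductive derP (G : list prop) : prop -> Prop :=
| derP_hyp p : In p G -> derP G p
| derP_thm p : provP p -> derP G p
| derP_mp p q : derP G (PImp p q) -> derP G p -> derP G q.

Lemma A_id a : provA (AImp a a).
Proof.
  eapply A_MP; [eapply A_MP; [apply (A_S a (AImp a a) a) | apply A_K] | apply (A_K a a)].
Qed.

Lemma P_id p : provP (PImp p p).
Proof.
  eapply P_MP; [eapply P_MP; [apply (P_S p (PImp p p) p) | apply P_K] | apply (P_K p p)].
Qed.

Lemma derA_deduction G a b : derA (a :: G) b -> derA G (AImp a b).
Proof.
  induction 1 as [c Hc | c Hc | c d _ IHcd _ IHc].
  - destruct Hc as [<- | Hc].
    + apply derA_thm, A_id.
    + eapply derA_mp; [apply derA_thm, A_K | now apply derA_hyp].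
  - eapply derA_mp; [apply derA_thm, A_K | now apply derA_thm].
  - eapply derA_mp; [eapply derA_mp; [apply derA_thm, A_S | exact IHcd] | exact IHc].
Qed.

Lemma derP_deduction G p q : derP (p :: G) q -> derP G (PImp p q).
Proof.
  induction 1 as [r Hr | r Hr | r s _ IHrs _ IHr].
  - destruct Hr as [<- | Hr].
    + apply derP_thm, P_id.
    + eapply derP_mp; [apply derP_thm, P_K | now apply derP_hyp].
  - eapply derP_mp; [apply derP_thm, P_K | now apply derP_thm].
  - eapply derP_mp; [eapply derP_mp; [apply derP_thm, P_S | exact IHrs] | exact IHr].
Qed.

Lemma derA_closed a : derA [] a -> provA a.
Proof.
  induction 1 as [c [] | c Hc | c d _ IHcd _ IHc]; [exact Hc | exact (A_MP _ _ IHcd IHc)].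
Qed.

Lemma derP_closed p : derP [] p -> provP p.
Proof.
  induction 1 as [r [] | r Hr | r s _ IHrs _ IHr]; [exact Hr | exact (P_MP _ _ IHrs IHr)].
Qed.

Ltac by_hypA := apply derA_hyp; simpl; tauto.
Ltac by_hypP := apply derP_hyp; simpl; tauto.

Lemma A_comp a b c : provA (AImp a b) -> provA (AImp b c) -> provA (AImp a c).
Proof.
  intros Hab Hbc. apply derA_closed, derA_deduction.
  eapply derA_mp; [apply derA_thm, Hbc |].
  eapply derA_mp; [apply derA_thm, Hab | by_hypA].
Qed.

Lemma A_contra a b : provA (AImp a b) -> provA (AImp (ANeg b) (ANeg a)).
Proof.
  intro Hab. apply derA_closed, derA_deduction, derA_deduction.
  eapply derA_mp; [by_hypA |].
  eapply derA_mp; [apply derA_thm, Hab | by_hypA].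
Qed.

Lemma A_or_mono a b c d :
  provA (AImp a c) -> provA (AImp b d) -> provA (AOr a b) -> provA (AOr c d).
Proof.
  intros Hac Hbd Hab. apply derA_closed.
  eapply derA_mp; [eapply derA_mp; [eapply derA_mp; [apply derA_thm, A_OrE | ] | ]
                  | apply derA_thm, Hab].
  - apply derA_deduction. eapply derA_mp; [apply derA_thm, A_OrI1 |].
    eapply derA_mp; [apply derA_thm, Hac | by_hypA].
  - apply derA_deduction. eapply derA_mp; [apply derA_thm, A_OrI2 |].
    eapply derA_mp; [apply derA_thm, Hbd | by_hypA].
Qed.

Lemma bang_mono p q : provP (PImp p q) -> provA (AImp (ABang p) (ABang q)).
Proof. intro Hpq. exact (A_MP _ _ (A_BangImp p q) (A_BangRule _ Hpq)). Qed.

(* !~p -> ~!p: a classical refutation yields an intuitionistic one, via !0 -> bot. *)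
Lemma bang_neg p : provA (AImp (ABang (PNeg p)) (ANeg (ABang p))).
Proof.
  apply derA_closed, derA_deduction, derA_deduction.
  eapply derA_mp; [apply derA_thm, A_BangFalse |].
  eapply derA_mp; [eapply derA_mp; [apply derA_thm, (A_BangImp p PFalse) | by_hypA] | by_hypA].
Qed.

Lemma quest_neg a : provP (PImp (PQ (ANeg a)) (PNeg (PQ a))).
Proof.
  apply derP_closed, derP_deduction, derP_deduction.
  eapply derP_mp; [apply derP_thm, P_QBot |].
  eapply derP_mp; [eapply derP_mp; [apply derP_thm, (P_QImp a ABot) | by_hypP] | by_hypP].
Qed.

(* ~a -> !~?a, through ~a -> !?~a (schema a -> !?a) and quest_neg under !. *)
Lemma neg_bang_quest a : provA (AImp (ANeg a) (ABang (PNeg (PQ a)))).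
Proof. exact (A_comp _ _ _ (A_BangQ (ANeg a)) (bang_mono _ _ (quest_neg a))). Qed.

Lemma transfer Y N Y' N' :
  provA (AImp Y' Y) -> provA (AImp N' N) ->
  (provA (AImp (ANeg N') Y') -> provA (AImp (ANeg N) Y)) /\
  (provA (AOr Y' N') -> provA (AOr Y N)).
Proof.
  intros HY HN. split; intro H.
  - exact (A_comp _ _ _ (A_contra _ _ HN) (A_comp _ _ _ H HY)).
  - exact (A_or_mono _ _ _ _ HY HN H).
Qed.

Theorem proposition2p19 :
  (* (a) *)
  (forall p : prop,
      (stableP p -> stableA (ABang p)) /\ (decP p -> decA (ABang p))) /\
  (forall a : prob,
      (stableA (ABang (PQ a)) -> stableP (PQ a)) /\
      (decA (ABang (PQ a)) -> decP (PQ a))) /\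
  (* (b) *)
  (forall a : prob,
      (stableA a -> stableP (PQ a)) /\ (decA a -> decP (PQ a))) /\
  (forall p : prop,
      (stableP (PQ (ABang p)) -> stableA (ABang p)) /\
      (decP (PQ (ABang p)) -> decA (ABang p))).
Proof.
  split; [| split; [| split]].
  - (* !p -> !p and !~p -> ~!p *)
    intro p. exact (transfer _ _ _ _ (A_id _) (bang_neg p)).
  - (* !?a -> !?a and ~!?a -> ~a -> !~?a *)
    intro a. apply (transfer _ _ _ _ (A_id _)).
    exact (A_comp _ _ _ (A_contra _ _ (A_BangQ a)) (neg_bang_quest a)).
  - (* a -> !?a and ~a -> !~?a *)
    intro a. exact (transfer _ _ _ _ (A_BangQ a) (neg_bang_quest a)).
  - (* !?!p -> !p and !~?!p -> ~!?!p -> ~!p *)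
    intro p. apply (transfer _ _ _ _ (bang_mono _ _ (P_QBang p))).
    exact (A_comp _ _ _ (bang_neg _) (A_contra _ _ (A_BangQ (ABang p)))).
Qed.
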